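(* Let $n=36$ and let $\mathcal{D}_{S_1},\mathcal{D}_{S_2}\subseteq\mathcal{D}_{[36]}\setminus\{36\}$ with $12\in\mathcal{D}_{S_1}\cap\mathcal{D}_{S_2}$. If $\mathrm{Spec}(\mathrm{ICG}(36,\mathcal{D}_{S_1}))=\mathrm{Spec}(\mathrm{ICG}(36,\mathcal{D}_{S_2}))$, then $\mathcal{D}_{S_1}=\mathcal{D}_{S_2}$.
   Context: Identify $\mathbb{Z}_n$ with $[n]=\{1,\dots,n\}$. For a divisor $d$ of $n$, $G_n(d)=\{j\in[n]:\gcd(j,n)=d\}$; $\mathcal{D}_{[n]}$ is the set of positive divisors of $n$. For $\mathcal{D}\subseteq\mathcal{D}_{[n]}\setminus\{n\}$, $\mathrm{ICG}(n,\mathcal{D})=\mathrm{Cay}(\mathbb{Z}_n,S)$ with $S=\bigcup_{d\in\mathcal{D}}G_n(d)$, and $\mathcal{D}=\mathcal{D}_S$. $\mathrm{Spec}$ is the multiset of adjacency eigenvalues. *)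

From mathcomp Require Import all_boot all_order all_algebra all_field.
Set Implicit Arguments. Unset Strict Implicit. Unset Printing Implicit Defensive.
Import GRing.Theory Num.Theory.
Local Open Scope ring_scope.

(* Z_n is identified with the ordinals 'I_n (the residue 0 plays the role of n in [n];
   note gcdn 0 n = n = gcdn n n, so G_n(d) is unaffected).
   S = union of G_n(d), d in D, i.e. S = {j | gcd(j,n) \in D}. *)
Definition ICG_adj (n : nat) (D : pred nat) : 'M[algC]_n :=
  \matrix_(i < n, j < n) ((gcdn ((j + n - i) %% n) n \in D) : nat)%:R.

(* Spec A = multiset of eigenvalues of A (over algC, with algebraic multiplicity):
   the multiplicity of z is its multiplicity as a root of the characteristic polynomial. *)
Definition spec_mult (n : nat) (A : 'M[algC]_n) (z : algC) : nat :=
  mup z (char_poly A).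

Definition same_spec (n : nat) (A B : 'M[algC]_n) : Prop :=
  forall z : algC, spec_mult A z = spec_mult B z.

From mathcomp Require Import all_boot all_order all_algebra all_field.
Set Implicit Arguments. Unset Strict Implicit. Unset Printing Implicit Defensive.
Import GRing.Theory Num.Theory.
Local Open Scope ring_scope.

(* ICG(36, D) is a circulant matrix, diagonalised by the Fourier matrix, so its
   spectrum determines the power sums of its eigenvalues, i.e. the traces of its
   powers.  The trace of the p-th power is 36 times the number of closed walks of
   length p at 0.  Since 12 is in D and 36 is not, D is determined by which of
   1, 2, 3, 4, 6, 9, 18 it contains, and a computation shows that the closed-walk
   counts for p = 2, 3, 4 already separate these 128 divisor sets. *)

Lemma uniq_map_inj_in (T1 T2 : eqType) (f : T1 -> T2) (s : seq T1) :
  uniq (map f s) -> {in s &, injective f}.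
Proof.
elim: s => //= a s IHs /andP[fa_notin uniq_fs] x y; rewrite !inE.
case/orP=> [/eqP->|xs] /orP[/eqP->|ys] // eq_f.
- by move: fa_notin; rewrite eq_f map_f.
- by move: fa_notin; rewrite -eq_f map_f.
- exact: IHs.
Qed.

Lemma similar_char_poly (F : fieldType) n (P A B : 'M[F]_n) :
  P \in unitmx -> A *m P = P *m B -> char_poly A = char_poly B.
Proof.
move=> P_unit AP_PB; pose Px := map_mx polyC P.
have cp_intertwine : char_poly_mx A *m Px = Px *m char_poly_mx B.
  by rewrite /char_poly_mx mulmxBl mulmxBr mul_mx_scalar mul_scalar_mx -!map_mxM AP_PB.
have detPx_neq0 : \det Px != 0 by rewrite det_map_mx polyC_eq0 -unitfE -unitmxE.
apply: (mulIf detPx_neq0).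
by rewrite /char_poly -det_mulmx cp_intertwine det_mulmx mulrC.
Qed.

Lemma similar_exp (R : pzRingType) n (P A B : 'M[R]_n) p :
  A *m P = P *m B -> A ^+ p *m P = P *m B ^+ p.
Proof.
move=> AP_PB; elim: p => [|p IHp]; first by rewrite !expr0 mul1mx mulmx1.
by rewrite !exprSr -!mulmxE -mulmxA AP_PB mulmxA IHp mulmxA.
Qed.

Lemma similar_mxtrace_exp (R : comUnitRingType) n (P A B : 'M[R]_n) p :
  P \in unitmx -> A *m P = P *m B -> \tr (A ^+ p) = \tr (B ^+ p).
Proof.
move=> P_unit /(similar_exp p) ApP_PBp.
by rewrite -(mulmxK P_unit (A ^+ p)) ApP_PBp -mulmxA mxtrace_mulC -mulmxA mulVmx ?mulmx1.
Qed.

Lemma diag_mx_exp (R : pzRingType) n (d : 'rV[R]_n) p :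
  diag_mx d ^+ p = diag_mx (\row_j d 0 j ^+ p).
Proof.
elim: p => [|p IHp].
  by rewrite expr0; apply/matrixP => i j; rewrite !mxE expr0.
apply/matrixP => i j; rewrite exprSr IHp -mulmxE mul_diag_mx !mxE exprSr.
by case: eqP => [->|_]; rewrite ?mulr1n ?mulr0n ?mulr0.
Qed.

Definition circulant (R : Type) (n : nat) (a : nat -> R) : 'M[R]_n :=
  \matrix_(i < n, j < n) a ((j + n - i) %% n)%N.

(* Number of p-step walks from 0 to t in Cay(Z_n, S), step m being taken with
   multiplicity c m. *)
Definition circ_walks (n : nat) (c : nat -> nat) (p : nat) : nat -> nat :=
  iter p (fun w t => \sum_(m < n) w ((t + n - m) %% n) * c m)%N (fun t => (t == 0)%N : nat).

Lemma ICG_adj_circulant n (D : pred nat) :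
  ICG_adj n D = circulant n (fun m => ((gcdn m n \in D) : nat)%:R).
Proof. by []. Qed.

Section Circulant.
Variables (R : pzRingType) (n : nat).
Local Notation N := n.+1.

Lemma val_ord_sub (i j : 'I_N) : val (j - i) = ((j + N - i) %% N)%N.
Proof. by rewrite /= modnDmr addnBA // ltnW. Qed.

Lemma circulantE (a : nat -> R) (i j : 'I_N) : circulant N a i j = a (j - i).
Proof. by rewrite mxE -val_ord_sub. Qed.

Lemma eq_circulant (a b : nat -> R) : a =1 b -> circulant N a = circulant N b.
Proof. by move=> eq_ab; apply/matrixP => i j; rewrite !mxE eq_ab. Qed.

Lemma circulantM (a b : nat -> R) :
  circulant N a *m circulant N b =
  circulant N (fun t => \sum_(m < N) a ((t + N - m) %% N)%N * b m).
Proof.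
apply/matrixP => i j; rewrite mxE circulantE (reindex_inj (subrI j)).
by apply: eq_bigr => m _; rewrite !circulantE subKr -val_ord_sub addrAC.
Qed.

Lemma circulant_delta0 : circulant N (fun t => ((t == 0)%N : nat)%:R) = 1 :> 'M[R]_N.
Proof.
apply/matrixP => i j; rewrite circulantE !mxE.
by rewrite -[(_ == 0)%N]/(j - i == 0) subr_eq0 eq_sym.
Qed.

Lemma mxtrace_circulant (a : nat -> R) : \tr (circulant N a) = a 0%N *+ N.
Proof.
rewrite /mxtrace (eq_bigr (fun=> a 0%N)) ?sumr_const ?card_ord // => i _.
by rewrite circulantE subrr.
Qed.

Lemma circulant_exp (c : nat -> nat) p :
  circulant N (fun m => (c m)%:R) ^+ p =
  circulant N (fun t => (circ_walks N c p t)%:R) :> 'M[R]_N.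
Proof.
elim: p => [|p IHp]; first by rewrite expr0 -circulant_delta0.
rewrite exprSr IHp -mulmxE circulantM; apply: eq_circulant => t.
by rewrite /= natr_sum; apply: eq_bigr => m _; rewrite natrM.
Qed.

Lemma mxtrace_circulant_exp (c : nat -> nat) p :
  \tr (circulant N (fun m => (c m)%:R) ^+ p) = (N * circ_walks N c p 0)%:R :> R.
Proof. by rewrite circulant_exp mxtrace_circulant mulnC natrM mulr_natr. Qed.

End Circulant.

Section Fourier.
Variables (F : fieldType) (n : nat) (z : F).
Local Notation N := n.+1.
Hypothesis z_prim : N.-primitive_root z.

Definition fourier_mx : 'M[F]_N := \matrix_(i < N, k < N) z ^+ (i * k).

Definition circ_eigenvalue (a : nat -> F) (k : nat) : F :=
  \sum_(m < N) a m * z ^+ (m * k).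

Lemma fourier_mx_unit : fourier_mx \in unitmx.
Proof.
have -> : fourier_mx = Vandermonde N (\row_k z ^+ k).
  by apply/matrixP => i k; rewrite !mxE -exprM mulnC.
rewrite unitmxE det_Vandermonde unitfE; apply/prodf_neq0 => i _.
apply/prodf_neq0 => k lt_ik; rewrite !mxE subr_eq0 (eq_prim_root_expr z_prim).
by rewrite !modn_small // neq_ltn lt_ik orbT.
Qed.

Lemma circulant_fourier (a : nat -> F) :
  circulant N a *m fourier_mx = fourier_mx *m diag_mx (\row_k circ_eigenvalue a k).
Proof.
apply/matrixP => i k; rewrite mul_mx_diag !mxE /circ_eigenvalue mulr_sumr.
rewrite (reindex_inj (addrI i)); apply: eq_bigr => m _.
rewrite circulantE addrC addKr !mxE mulrCA -exprD -mulnDl.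
by rewrite -(prim_expr_mod z_prim) modnMml prim_expr_mod.
Qed.

Lemma char_poly_circulant (a : nat -> F) :
  char_poly (circulant N a) = \prod_(k < N) ('X - (circ_eigenvalue a k)%:P).
Proof.
rewrite (similar_char_poly fourier_mx_unit (circulant_fourier a)).
rewrite char_poly_trig ?diag_mx_is_trig //.
by apply: eq_bigr => k _; rewrite !mxE eqxx mulr1n.
Qed.

Lemma mxtrace_circulant_exp_eigen (a : nat -> F) p :
  \tr (circulant N a ^+ p) = \sum_(k < N) circ_eigenvalue a k ^+ p.
Proof.
rewrite (similar_mxtrace_exp p fourier_mx_unit (circulant_fourier a)).
by rewrite diag_mx_exp mxtrace_diag; apply: eq_bigr => k _; rewrite !mxE.
Qed.

End Fourier.

Lemma same_spec_circ_walks n (c1 c2 : nat -> nat) p :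
  same_spec (circulant n.+1 (fun m => (c1 m)%:R)) (circulant n.+1 (fun m => (c2 m)%:R)) ->
  circ_walks n.+1 c1 p 0 = circ_walks n.+1 c2 p 0.
Proof.
move=> same.
have [z z_prim] := C_prim_root_exists (ltn0Sn n).
pose eigs (c : nat -> nat) :=
  [seq circ_eigenvalue n z (fun m => (c m)%:R) k | k : 'I_n.+1 <- index_enum 'I_n.+1].
have char_poly_eigs c :
    char_poly (circulant n.+1 (fun m => (c m)%:R)) = \prod_(y <- eigs c) ('X - y%:P).
  by rewrite (char_poly_circulant z_prim) big_map.
have perm_eigs : perm_eq (eigs c1) (eigs c2).
  apply/allP => x _; apply/eqP.
  by have := same x; rewrite /spec_mult !char_poly_eigs !mu_prod_XsubC.
have := perm_big (x := 0) _ perm_eigs (op := +%R) (P := xpredT) (F := fun y => y ^+ p).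
rewrite !big_map -!(mxtrace_circulant_exp_eigen z_prim) !mxtrace_circulant_exp.
by move/eqP; rewrite eqr_nat eqn_pmul2l // => /eqP.
Qed.

Local Open Scope nat_scope.

(* [circ_walks] mod q, computed on the whole table of values at 0 .. n-1 so that
   evaluation is not exponential in p. *)
Definition walk_table (n q : nat) (c : nat -> nat) (p : nat) : seq nat :=
  iter p (fun w => [seq sumn [seq nth 0 w ((t + n - m) %% n) * c m | m <- iota 0 n] %% q
                   | t <- iota 0 n])
    [seq (t == 0 : nat) %% q | t <- iota 0 n].

Lemma nth_walk_table n q c p t :
  t < n -> nth 0 (walk_table n q c p) t = circ_walks n c p t %% q.
Proof.
elim: p t => [|p IHp] t lt_tn; rewrite /walk_table /= (nth_map 0) ?size_iota //.
  by rewrite nth_iota.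
rewrite nth_iota // add0n -/(walk_table n q c p) sumnE big_map.
rewrite (_ : iota 0 n = index_iota 0 n) ?big_mkord; last by rewrite /index_iota subn0.
rewrite -[LHS]modn_summ -[RHS]modn_summ; congr (_ %% q); apply: eq_bigr => m _.
by rewrite IHp ?ltn_pmod ?(leq_ltn_trans _ lt_tn) // modnMml.
Qed.

Lemma eq_circ_walks n (c1 c2 : nat -> nat) p :
  c1 =1 c2 -> circ_walks n c1 p =1 circ_walks n c2 p.
Proof.
move=> eq_c; elim: p => [|p IHp] t //=.
by apply: eq_bigr => m _; rewrite IHp eq_c.
Qed.

Definition divisors36_but12 : seq nat := [:: 1; 2; 3; 4; 6; 9; 18].

Definition divisor_code (D : pred nat) : seq bool := [seq d \in D | d <- divisors36_but12].

Lemma divisor_codeK (D : pred nat) :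
  (forall d, d \in D -> (d %| 36) && (d != 36)) -> 12 \in D ->
  D =i 12 :: mask (divisor_code D) divisors36_but12.
Proof.
move=> D_divisors D_12 d; rewrite -filter_mask in_cons mem_filter.
have [->|ne_d12] := eqVneq d 12; first by [].
case D_d: (d \in D) => //=; have /andP[d_dvd ne_d36] := D_divisors d D_d.
have : d \in divisors 36 by rewrite -dvdn_divisors.
have -> : divisors 36 = [:: 1; 2; 3; 4; 6; 9; 12; 18; 36] by [].
by rewrite !inE (negPf ne_d12) (negPf ne_d36) !orbF.
Qed.

Fixpoint bitseqs (k : nat) : seq (seq bool) :=
  if k is k'.+1 then [seq x :: b | x <- [:: false; true], b <- bitseqs k'] else [:: [::]].

Lemma mem_bitseqs k b : size b = k -> b \in bitseqs k.
Proof.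
elim: k b => [|k IHk] [|x b] //= [size_b].
by rewrite mem_cat cats0; case: x; rewrite (map_f (cons _)) ?orbT ?IHk.
Qed.

Definition code_weight (b : seq bool) (m : nat) : nat :=
  gcdn m 36 \in 12 :: mask b divisors36_but12.

(* Reduction mod 61 only keeps the kernel computation small. *)
Definition walk_fingerprint (b : seq bool) : seq nat :=
  [seq nth 0 (walk_table 36 61 (code_weight b) p) 0 | p <- [:: 2; 3; 4]].

Lemma uniq_walk_fingerprint : uniq [seq walk_fingerprint b | b <- bitseqs 7].
Proof. by vm_compute. Qed.

Lemma walk_fingerprint_code (D : pred nat) :
  (forall d, d \in D -> (d %| 36) && (d != 36)) -> 12 \in D ->
  walk_fingerprint (divisor_code D) =
  [seq circ_walks 36 (fun m => gcdn m 36 \in D : nat) p 0 %% 61 | p <- [:: 2; 3; 4]].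
Proof.
move=> D_divisors D_12; apply: eq_map => p; rewrite nth_walk_table //.
congr (_ %% 61); apply: eq_circ_walks => m.
by rewrite /code_weight -divisor_codeK.
Qed.

Theorem lemma3p23 (D1 D2 : pred nat) :
  (forall d, d \in D1 -> (d %| 36)%N && (d != 36%N)) ->
  (forall d, d \in D2 -> (d %| 36)%N && (d != 36%N)) ->
  12%N \in D1 -> 12%N \in D2 ->
  same_spec (ICG_adj 36 D1) (ICG_adj 36 D2) ->
  D1 =i D2.
Proof.
move=> D1_divisors D2_divisors D1_12 D2_12; rewrite !ICG_adj_circulant => same.
have walks_eq p := same_spec_circ_walks p
  (c1 := fun m => gcdn m 36 \in D1 : nat) (c2 := fun m => gcdn m 36 \in D2 : nat) same.
have codes_eq : divisor_code D1 = divisor_code D2.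
  apply: (uniq_map_inj_in uniq_walk_fingerprint); rewrite ?mem_bitseqs ?size_map //.
  by rewrite !walk_fingerprint_code //; apply: eq_map => p; rewrite walks_eq.
move=> d; rewrite (divisor_codeK D1_divisors D1_12) (divisor_codeK D2_divisors D2_12).
by rewrite codes_eq.
Qed.
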